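(* Let $k$ be a commutative ring with trivial $C_2$-action and let $M$, $N$ be $k$-modules with $k$-linear involutions, such that $2$ is invertible in $M$ or in $N$. Then there is an isomorphism of $C_2$-Mackey functors \[\underline M^{\mathrm{fix}}\Box_{\underline k^c}\underline N^{\mathrm{fix}}\cong\underline{(M\otimes_k N)}^{\mathrm{fix}},\] natural in $M$ and $N$, where $C_2$ acts diagonally on $M\otimes_k N$. If $M$ and $N$ are moreover commutative $k$-algebras (with involutions that are $k$-algebra maps), this is an isomorphism of $C_2$-Tambara functors.
   Context: $C_2=\{e,\tau\}$. For an abelian group (resp. commutative ring) $L$ with involution $a\mapsto\bar a$, $\underline L^{\mathrm{fix}}$ is the $C_2$-Mackey (resp. Tambara) functor with value $L^{C_2}$ at $C_2/C_2$, $L$ at $C_2/e$ (Weyl action the involution), $\mathrm{res}$ the inclusion, $\mathrm{tr}(a)=a+\bar a$, and (for rings) $\mathrm{nm}(a)=a\bar a$; for trivial involution it is written $\underline L^c$. $\Box$ is the box product of $C_2$-Mackey functors, and for a Tambara functor $\underline S$ and $\underline S$-modules $\underline M,\underline N$, $\underline M\Box_{\underline S}\underline N$ is the coequalizer of the two maps $\underline M\Box\underline S\Box\underline N\rightrightarrows\underline M\Box\underline N$ given by the actions. Here $\underline M^{\mathrm{fix}}$ and $\underline N^{\mathrm{fix}}$ are $\underline k^c$-modules via the $k$-module structures. *)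

From HB Require Import structures.
From mathcomp Require Import all_boot all_order all_algebra.
Set Implicit Arguments. Unset Strict Implicit. Unset Printing Implicit Defensive.
Import Order.TTheory GRing.Theory.
Local Open Scope ring_scope.

Definition is_add (U V : zmodType) (f : U -> V) := forall x y, f (x + y) = f x + f y.

Record mackey := Mackey {
  mk_top : zmodType;            (* value at C_2/C_2 *)
  mk_bot : zmodType;            (* value at C_2/e   *)
  mk_w   : mk_bot -> mk_bot;
  mk_res : mk_top -> mk_bot;
  mk_tr  : mk_bot -> mk_top }.

Definition is_mackey (M : mackey) :=
  [/\ is_add (@mk_w M), is_add (@mk_res M) & is_add (@mk_tr M)] /\
  [/\ involutive (@mk_w M),
      (forall a, mk_w (mk_res a) = mk_res a :> mk_bot M),
      (forall x, mk_tr (mk_w x) = mk_tr x :> mk_top M) &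
      (forall x, mk_res (mk_tr x) = x + mk_w x :> mk_bot M)].

Record mackey_hom (M N : mackey) := MackeyHom {
  mh_top : mk_top M -> mk_top N;
  mh_bot : mk_bot M -> mk_bot N }.

Definition is_mackey_hom (M N : mackey) (f : mackey_hom M N) :=
  [/\ is_add (mh_top f), is_add (mh_bot f),
      (forall x, mh_bot f (mk_w x) = mk_w (mh_bot f x)),
      (forall a, mh_bot f (mk_res a) = mk_res (mh_top f a)) &
      (forall x, mh_top f (mk_tr x) = mk_tr (mh_bot f x))].

Definition is_mackey_iso (M N : mackey) (f : mackey_hom M N) :=
  [/\ is_mackey_hom f, bijective (mh_top f) & bijective (mh_bot f)].

(* ---------- Dress pairings M x N -> P (= maps M [] N -> P) ---------- *)
Record pairing (M N P : mackey) := Pairing {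
  pr_top : mk_top M -> mk_top N -> mk_top P;
  pr_bot : mk_bot M -> mk_bot N -> mk_bot P }.

Definition is_dress_pairing (M N P : mackey) (p : pairing M N P) :=
  [/\ (forall a, is_add (pr_top p a)), (forall b, is_add (pr_top p ^~ b)),
      (forall x, is_add (pr_bot p x)) & (forall y, is_add (pr_bot p ^~ y))] /\
  [/\ (forall x y, mk_w (pr_bot p x y) = pr_bot p (mk_w x) (mk_w y)),
      (forall a b, mk_res (pr_top p a b) = pr_bot p (mk_res a) (mk_res b)),
      (forall x b, mk_tr (pr_bot p x (mk_res b)) = pr_top p (mk_tr x) b) &
      (forall a y, mk_tr (pr_bot p (mk_res a) y) = pr_top p a (mk_tr y))].

(* p is balanced for a right S-action on M and a left S-action on N: i.e. the
   induced map M [] N -> P coequalizes  M [] S [] N ==> M [] N  (M [] S [] N is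
   generated by elementary tensors at both levels together with transfers). *)
Definition balanced (S M N P : mackey) (muM : pairing M S M) (muN : pairing S N N)
    (p : pairing M N P) :=
  (forall a s b, pr_top p (pr_top muM a s) b = pr_top p a (pr_top muN s b)) /\
  (forall x s y, pr_bot p (pr_bot muM x s) y = pr_bot p x (pr_bot muN s y)).

(* (B, beta) is the relative box product  M []_S N : the coequalizer of
   M [] S [] N ==> M [] N, i.e. beta is the universal S-balanced Dress pairing. *)
Definition is_rel_box (S M N : mackey) (muM : pairing M S M) (muN : pairing S N N)
    (B : mackey) (beta : pairing M N B) :=
  [/\ is_mackey B, is_dress_pairing beta, balanced muM muN beta &
      forall (P : mackey) (p : pairing M N P),
        is_mackey P -> is_dress_pairing p -> balanced muM muN p ->
        exists f : mackey_hom B P,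
          [/\ is_mackey_hom f,
              (forall a b, mh_top f (pr_top beta a b) = pr_top p a b),
              (forall x y, mh_bot f (pr_bot beta x y) = pr_bot p x y) &
              (forall g : mackey_hom B P, is_mackey_hom g ->
                 (forall a b, mh_top g (pr_top beta a b) = pr_top p a b) ->
                 (forall x y, mh_bot g (pr_bot beta x y) = pr_bot p x y) ->
                 (forall u, mh_top g u = mh_top f u) /\
                 (forall v, mh_bot g v = mh_bot f v))]].

Section Fix.
Variables (V : zmodType) (s : {additive V -> V}).

Definition fixp : {pred V} := fun x => s x == x.

Lemma fixp_zmod_closed : zmod_closed fixp.
Proof.
split; first by rewrite /fixp unfold_in /= raddf0.
by move=> x y; rewrite /fixp !unfold_in /= raddfB => /eqP -> /eqP ->.
Qed.

HB.instance Definition _ := GRing.isZmodClosed.Build V fixp fixp_zmod_closed.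

Record fix_t := FixT { fix_val :> V; _ : fix_val \in fixp }.
HB.instance Definition _ := [isSub for fix_val].
HB.instance Definition _ := [Choice of fix_t by <:].
HB.instance Definition _ := [SubChoice_isSubZmodule of fix_t by <:].

Definition fix_mackey : mackey :=
  @Mackey fix_t V s (fun a : fix_t => fix_val a) (fun x => insubd (0 : fix_t) (x + s x)).
End Fix.

Definition const_mackey (k : zmodType) : mackey :=
  @Mackey k k id id (fun x => x *+ 2).

Definition act_r (k : comPzRingType) (M : lmodType k) (t : {additive M -> M}) :
    pairing (fix_mackey t) (const_mackey k) (fix_mackey t) :=
  @Pairing (fix_mackey t) (const_mackey k) (fix_mackey t)
    (fun a r => insubd (0 : fix_t t) (r *: fix_val a)) (fun x r => r *: x).

Definition act_l (k : comPzRingType) (N : lmodType k) (t : {additive N -> N}) :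
    pairing (const_mackey k) (fix_mackey t) (fix_mackey t) :=
  @Pairing (const_mackey k) (fix_mackey t) (fix_mackey t)
    (fun r b => insubd (0 : fix_t t) (r *: fix_val b)) (fun r y => r *: y).

Definition is_klin (k : pzRingType) (U V : lmodType k) (f : U -> V) :=
  forall r x y, f (r *: x + y) = r *: f x + f y.

Definition is_bilin (k : pzRingType) (M N P : lmodType k) (b : M -> N -> P) :=
  (forall m, is_klin (b m)) /\ (forall n, is_klin (b ^~ n)).

Definition is_tensor (k : comPzRingType) (M N T : lmodType k) (t : M -> N -> T) :=
  is_bilin t /\
  forall (P : lmodType k) (b : M -> N -> P), is_bilin b ->
    exists f : T -> P, [/\ is_klin f, (forall m n, f (t m n) = b m n) &
      forall g : T -> P, is_klin g -> (forall m n, g (t m n) = b m n) ->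
        forall z, g z = f z].

Definition can_pairing (k : comPzRingType) (M N T : lmodType k)
    (tM : {additive M -> M}) (tN : {additive N -> N}) (tT : {additive T -> T})
    (t : M -> N -> T) : pairing (fix_mackey tM) (fix_mackey tN) (fix_mackey tT) :=
  @Pairing (fix_mackey tM) (fix_mackey tN) (fix_mackey tT)
    (fun a b => insubd (0 : fix_t tT) (t (fix_val a) (fix_val b))) t.

Definition two_invertible (M : zmodType) := bijective (fun x : M => x *+ 2).

Record tambara_ops (M : mackey) := TambaraOps {
  to_mul1 : mk_top M -> mk_top M -> mk_top M;
  to_one1 : mk_top M;
  to_mule : mk_bot M -> mk_bot M -> mk_bot M;
  to_onee : mk_bot M;
  to_nm   : mk_bot M -> mk_top M }.

Definition is_comring_ops (V : zmodType) (mul : V -> V -> V) (one : V) :=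
  [/\ associative mul, commutative mul, left_id one mul &
      left_distributive mul +%R].

Definition is_tambara (M : mackey) (o : tambara_ops M) :=
  [/\ is_mackey M,
      is_comring_ops (to_mul1 o) (to_one1 o) &
      is_comring_ops (to_mule o) (to_onee o)] /\
  [/\
      (forall a b, mk_res (to_mul1 o a b) = to_mule o (mk_res a) (mk_res b))
        /\ mk_res (to_one1 o) = to_onee o,
      (forall x y, mk_w (to_mule o x y) = to_mule o (mk_w x) (mk_w y))
        /\ mk_w (to_onee o) = to_onee o,
      (forall x a, to_mul1 o (mk_tr x) a = mk_tr (to_mule o x (mk_res a))) &
      [/\ (forall x y, to_nm o (to_mule o x y) = to_mul1 o (to_nm o x) (to_nm o y)),
          to_nm o (to_onee o) = to_one1 o,
          (forall x, to_nm o (mk_w x) = to_nm o x),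
          (forall x, mk_res (to_nm o x) = to_mule o x (mk_w x)) &
          (forall x y, to_nm o (x + y) =
               to_nm o x + to_nm o y + mk_tr (to_mule o x (mk_w y)))]].

Definition is_tambara_hom (M N : mackey) (oM : tambara_ops M) (oN : tambara_ops N)
    (f : mackey_hom M N) :=
  is_mackey_hom f /\
  [/\ (forall a b, mh_top f (to_mul1 oM a b) = to_mul1 oN (mh_top f a) (mh_top f b)),
      mh_top f (to_one1 oM) = to_one1 oN,
      (forall x y, mh_bot f (to_mule oM x y) = to_mule oN (mh_bot f x) (mh_bot f y)),
      mh_bot f (to_onee oM) = to_onee oN &
      (forall x, mh_top f (to_nm oM x) = to_nm oN (mh_bot f x))].

Definition fix_tambara (L : comPzRingType) (s : {additive L -> L}) :
    tambara_ops (fix_mackey s) :=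
  @TambaraOps (fix_mackey s)
    (fun a b => insubd (0 : fix_t s) (fix_val a * fix_val b))
    (insubd (0 : fix_t s) 1)
    *%R 1
    (fun x => insubd (0 : fix_t s) (x * s x)).

(* a Tambara structure on B is the one induced by the relative box product
   of Tambara functors: beta is multiplicative, unital, and compatible with norms *)
Definition box_tambara_compat (M N B : mackey) (oM : tambara_ops M)
    (oN : tambara_ops N) (oB : tambara_ops B) (beta : pairing M N B) :=
  [/\ (forall a b a' b', to_mul1 oB (pr_top beta a b) (pr_top beta a' b') =
                         pr_top beta (to_mul1 oM a a') (to_mul1 oN b b')),
      to_one1 oB = pr_top beta (to_one1 oM) (to_one1 oN),
      (forall x y x' y', to_mule oB (pr_bot beta x y) (pr_bot beta x' y') =
                         pr_bot beta (to_mule oM x x') (to_mule oN y y')),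
      to_onee oB = pr_bot beta (to_onee oM) (to_onee oN) &
      (forall x y, to_nm oB (pr_bot beta x y) = pr_top beta (to_nm oM x) (to_nm oN y))].

From HB Require Import structures.
From mathcomp Require Import all_boot all_order all_algebra.
From mathcomp Require Import boolp ring.
Set Implicit Arguments. Unset Strict Implicit. Unset Printing Implicit Defensive.
Import GRing.Theory.
Local Open Scope ring_scope.

(* The pairing (a, b) |-> a (x) b is a balanced Dress pairing, so it induces
   phi : M^fix []_(k^c) N^fix -> (M (x) N)^fix.  At the underlying level phi is
   inverted by m (x) n |-> m [] n.  If h halves M (the case of N is symmetric)
   and H = h (x) id, then every fixed z satisfies z = H z + tau (H z) = tr (H z),
   and for fixed a, b Frobenius reciprocity gives tr (h a [] b) = tr (h a) [] b
   = a [] b; hence u |-> tr (psi (H u)) inverts phi at the fixed level.  For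
   algebras, the Tambara structure of (M (x) N)^fix is transported along phi;
   conversely any compatible Tambara structure on the box product makes phi
   multiplicative, since phi is so on pure tensors and res is injective on
   fixed points. *)

Lemma is_add0 (U V : zmodType) (f : U -> V) : is_add f -> f 0 = 0.
Proof.
move=> fD; apply: (addrI (f 0)).
by rewrite -fD !addr0.
Qed.

Lemma klin_add (k : pzRingType) (U V : lmodType k) (f : U -> V) :
  is_klin f -> is_add f.
Proof. by move=> fL x y; have := fL 1 x y; rewrite !scale1r. Qed.

Lemma klin_scale (k : pzRingType) (U V : lmodType k) (f : U -> V) :
  is_klin f -> forall r x, f (r *: x) = r *: f x.
Proof. by move=> fL r x; rewrite -[r *: x]addr0 fL (is_add0 (klin_add fL)) addr0. Qed.

(* Hom_Z(k, A), a k-module through (r *: u) s = u (s * r): it lets the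
   universal property of M (x)_k N, stated for k-bilinear maps, produce maps
   into an arbitrary abelian group. *)
Section CoinducedModule.
Variables (k : comPzRingType) (A : zmodType).

Record zhom := ZHom { zhom_fun :> k -> A; zhomP : is_add zhom_fun }.

Lemma zhom_ext (u v : zhom) : zhom_fun u =1 zhom_fun v -> u = v.
Proof.
case: u v => f fP [g gP] /= /funext fg; subst g.
by rewrite (Prop_irrelevance fP gP).
Qed.

HB.instance Definition _ := gen_eqMixin zhom.
HB.instance Definition _ := gen_choiceMixin zhom.

Definition zhom_zero : zhom := @ZHom (fun _ => 0) (fun _ _ => esym (addr0 0)).

Lemma zhom_oppP (u : zhom) : is_add (fun s => - u s).
Proof. by move=> x y; rewrite zhomP opprD. Qed.
Definition zhom_opp u := ZHom (zhom_oppP u).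

Lemma zhom_addP (u v : zhom) : is_add (fun s => u s + v s).
Proof. by move=> x y; rewrite !zhomP addrACA. Qed.
Definition zhom_add u v := ZHom (zhom_addP u v).

Lemma zhom_addA : associative zhom_add.
Proof. by move=> u v w; apply: zhom_ext => s /=; rewrite addrA. Qed.
Lemma zhom_addC : commutative zhom_add.
Proof. by move=> u v; apply: zhom_ext => s /=; rewrite addrC. Qed.
Lemma zhom_add0 : left_id zhom_zero zhom_add.
Proof. by move=> u; apply: zhom_ext => s /=; rewrite add0r. Qed.
Lemma zhom_addN : left_inverse zhom_zero zhom_opp zhom_add.
Proof. by move=> u; apply: zhom_ext => s /=; rewrite addNr. Qed.

HB.instance Definition _ :=
  GRing.isZmodule.Build zhom zhom_addA zhom_addC zhom_add0 zhom_addN.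

Lemma zhom_scaleP (r : k) (u : zhom) : is_add (fun s => u (s * r)).
Proof. by move=> x y; rewrite mulrDl zhomP. Qed.
Definition zhom_scale r u := ZHom (zhom_scaleP r u).

Lemma zhom_scaleA a b v : zhom_scale a (zhom_scale b v) = zhom_scale (a * b) v.
Proof. by apply: zhom_ext => s /=; rewrite mulrA. Qed.
Lemma zhom_scale1 : left_id 1 zhom_scale.
Proof. by move=> u; apply: zhom_ext => s /=; rewrite mulr1. Qed.
Lemma zhom_scaleDr : right_distributive zhom_scale +%R.
Proof. by move=> r u v; apply: zhom_ext. Qed.
Lemma zhom_scaleDl v : {morph zhom_scale^~ v : a b / a + b}.
Proof. by move=> a b; apply: zhom_ext => s /=; rewrite mulrDr zhomP. Qed.

HB.instance Definition _ := GRing.Zmodule_isLmodule.Build k zhom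
  zhom_scaleA zhom_scale1 zhom_scaleDr zhom_scaleDl.

Lemma zhom_scaleE r (u : zhom) s : (r *: u) s = u (s * r).
Proof. by []. Qed.
Lemma zhom_addE (u v : zhom) s : (u + v) s = u s + v s.
Proof. by []. Qed.
End CoinducedModule.

Section TensorProduct.
Variables (k : comPzRingType) (M N T : lmodType k) (t : M -> N -> T).
Hypothesis tT : is_tensor t.

Lemma tensor_scalel r m n : t (r *: m) n = r *: t m n.
Proof. by case: tT => [[_ tL] _]; exact: (klin_scale (tL n)). Qed.
Lemma tensor_scaler r m n : t m (r *: n) = r *: t m n.
Proof. by case: tT => [[tL _] _]; exact: (klin_scale (tL m)). Qed.
Lemma tensor_addl m m' n : t (m + m') n = t m n + t m' n.
Proof. by case: tT => [[_ tL] _]; exact: (klin_add (tL n)). Qed.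
Lemma tensor_addr m n n' : t m (n + n') = t m n + t m n'.
Proof. by case: tT => [[tL _] _]; exact: (klin_add (tL m)). Qed.

Lemma tensor_balanced_univ (A : zmodType) (b : M -> N -> A) :
  (forall m, is_add (b m)) -> (forall n, is_add (b^~ n)) ->
  (forall r m n, b (r *: m) n = b m (r *: n)) ->
  exists f : T -> A, [/\ is_add f, forall m n, f (t m n) = b m n &
    forall g, is_add g -> (forall m n, g (t m n) = b m n) -> g =1 f].
Proof.
move=> bDr bDl bZ.
have bkP m n : is_add (fun s : k => b (s *: m) n).
  by move=> s1 s2; rewrite scalerDl bDl.
pose bk m n : zhom k A := ZHom (bkP m n).
have bk_bilin : is_bilin bk.
  split=> [m r x y | n r x y]; apply: zhom_ext => s; rewrite zhom_addE zhom_scaleE /=.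
    by rewrite bDr -bZ scalerA mulrC.
  by rewrite scalerDr scalerA bDl.
case: tT => _ /(_ _ _ bk_bilin) [F [FL Ft Funiq]].
exists (fun z => F z 1); split.
- by move=> x y; rewrite (klin_add FL).
- by move=> m n; rewrite Ft /= scale1r.
move=> g gD gt z.
have GP z' : is_add (fun s : k => g (s *: z')).
  by move=> s1 s2; rewrite scalerDl gD.
pose G z' : zhom k A := ZHom (GP z').
have GL : is_klin G.
  move=> r x y; apply: zhom_ext => s; rewrite zhom_addE zhom_scaleE /=.
  by rewrite scalerDr gD scalerA.
have Gt m n : G (t m n) = bk m n.
  by apply: zhom_ext => s /=; rewrite -tensor_scalel gt.
by have /(congr1 (fun u : zhom k A => u 1)) /= := Funiq G GL Gt z; rewrite scale1r.
Qed.

Lemma tensor_add_ext (A : zmodType) (g1 g2 : T -> A) : is_add g1 -> is_add g2 ->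
  (forall m n, g1 (t m n) = g2 (t m n)) -> g1 =1 g2.
Proof.
move=> g1D g2D g12.
have [|||f [_ _ funiq]] := @tensor_balanced_univ A (fun m n => g1 (t m n)).
- by move=> m x y; rewrite tensor_addr g1D.
- by move=> n x y; rewrite tensor_addl g1D.
- by move=> r m n; rewrite tensor_scalel tensor_scaler.
by move=> z; rewrite (funiq g1 g1D) // (funiq g2 g2D).
Qed.

Lemma tensor_add_ext2 (A : zmodType) (F G : T -> T -> A) :
  (forall z, is_add (F z)) -> (forall z, is_add (F^~ z)) ->
  (forall z, is_add (G z)) -> (forall z, is_add (G^~ z)) ->
  (forall m n m' n', F (t m n) (t m' n') = G (t m n) (t m' n')) ->
  forall z z', F z z' = G z z'.
Proof.
move=> FDr FDl GDr GDl FG z z'.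
have FGl m n : F (t m n) =1 G (t m n) := tensor_add_ext (FDr _) (GDr _) (FG m n).
exact: (tensor_add_ext (FDl z') (GDl z') (fun m n => FGl m n z') z).
Qed.

Lemma tensor_mapl (f : M -> M) : is_add f -> (forall r x, f (r *: x) = r *: f x) ->
  exists F : T -> T, is_add F /\ forall m n, F (t m n) = t (f m) n.
Proof.
move=> fD fZ.
have [|||F [FD Ft _]] := @tensor_balanced_univ T (fun m n => t (f m) n).
- by move=> m x y; rewrite tensor_addr.
- by move=> n x y; rewrite fD tensor_addl.
- by move=> r m n; rewrite fZ tensor_scalel tensor_scaler.
by exists F.
Qed.

Lemma tensor_mapr (f : N -> N) : is_add f -> (forall r x, f (r *: x) = r *: f x) ->
  exists F : T -> T, is_add F /\ forall m n, F (t m n) = t m (f n).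
Proof.
move=> fD fZ.
have [|||F [FD Ft _]] := @tensor_balanced_univ T (fun m n => t m (f n)).
- by move=> m x y; rewrite fD tensor_addr.
- by move=> n x y; rewrite tensor_addl.
- by move=> r m n; rewrite fZ tensor_scalel tensor_scaler.
by exists F.
Qed.
End TensorProduct.

Lemma two_invertible_half (V : zmodType) : two_invertible V ->
  exists h : V -> V, [/\ is_add h, (forall x, h x + h x = x) &
    (forall f : V -> V, is_add f -> forall x, f (h x) = h (f x))].
Proof.
case=> g gK Kg.
have gg x : g x + g x = x by rewrite -mulr2n Kg.
have g2 x : g (x + x) = x by rewrite -mulr2n gK.
exists g; split => //.
  by move=> x y; rewrite -{1}(gg x) -{1}(gg y) addrACA g2.
by move=> f fD x; rewrite -[in RHS](gg x) fD g2.
Qed.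

Section FixedPoints.
Variables (V : zmodType) (s : {additive V -> V}).

Lemma fix_valP (u : fix_t s) : s (fix_val u) = fix_val u.
Proof. by apply/eqP; case: u. Qed.

Lemma fix_insubdK x : s x = x -> fix_val (insubd (0 : fix_t s) x) = x.
Proof. by move=> sx; rewrite insubdK //; apply/eqP. Qed.

Lemma fix_valD (u v : fix_t s) : fix_val (u + v) = fix_val u + fix_val v.
Proof. by []. Qed.

Lemma fix_val_inj : injective (@fix_val V s).
Proof. exact: val_inj. Qed.

Hypothesis s_inv : involutive s.

Lemma fix_trK x : fix_val (insubd (0 : fix_t s) (x + s x)) = x + s x.
Proof. by rewrite fix_insubdK // raddfD s_inv addrC. Qed.

Lemma fix_mackeyP : is_mackey (fix_mackey s).
Proof.
split; split => /=.
- by move=> x y; rewrite raddfD.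
- by [].
- by move=> x y; apply: fix_val_inj; rewrite fix_valD !fix_trK raddfD addrACA.
- exact: s_inv.
- exact: fix_valP.
- by move=> x; congr insubd; rewrite s_inv addrC.
- by move=> x; rewrite fix_trK.
Qed.
End FixedPoints.

Lemma fix_scaleK (k : pzRingType) (V : lmodType k) (s : {additive V -> V}) :
  (forall r x, s (r *: x) = r *: s x) ->
  forall r (u : fix_t s), fix_val (insubd (0 : fix_t s) (r *: fix_val u)) = r *: fix_val u.
Proof. by move=> sZ r u; rewrite fix_insubdK // sZ fix_valP. Qed.

Definition mackey_inverse (M N : mackey) (f : mackey_hom M N) (g : mackey_hom N M) :=
  [/\ cancel (mh_top f) (mh_top g), cancel (mh_top g) (mh_top f),
      cancel (mh_bot f) (mh_bot g) & cancel (mh_bot g) (mh_bot f)].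

Lemma mackey_inverse_iso (M N : mackey) (f : mackey_hom M N) (g : mackey_hom N M) :
  is_mackey_hom f -> mackey_inverse f g -> is_mackey_iso f.
Proof. by move=> fh [t1 t2 b1 b2]; split => //; [exists (mh_top g) | exists (mh_bot g)]. Qed.

Lemma mackey_hom_comp (A B C : mackey) (f : mackey_hom A B) (g : mackey_hom B C) :
  is_mackey_hom f -> is_mackey_hom g ->
  is_mackey_hom (MackeyHom (mh_top g \o mh_top f) (mh_bot g \o mh_bot f)).
Proof.
case=> fDt fDb fw fres ftr [gDt gDb gw gres gtr]; split=> /=.
- by move=> x y /=; rewrite fDt gDt.
- by move=> x y /=; rewrite fDb gDb.
- by move=> x /=; rewrite fw gw.
- by move=> x /=; rewrite fres gres.
- by move=> x /=; rewrite ftr gtr.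
Qed.

Lemma mackey_hom_id (A : mackey) :
  is_mackey_hom (MackeyHom (@id (mk_top A)) (@id (mk_bot A))).
Proof. by []. Qed.

Section CanonicalPairing.
Variables (k : comPzRingType) (M N T : lmodType k).
Variables (tauM : {additive M -> M}) (tauN : {additive N -> N}) (tauT : {additive T -> T}).
Variable t : M -> N -> T.
Hypotheses (iM : involutive tauM) (iN : involutive tauN) (tT : is_tensor t).
Hypothesis tauTt : forall m n, tauT (t m n) = t (tauM m) (tauN n).

Lemma tensor_involutive : involutive tauT.
Proof.
apply: (tensor_add_ext tT (g1 := tauT \o tauT) (g2 := id)) => /=.
- by move=> x y; rewrite !raddfD.
- by [].
- by move=> m n; rewrite !tauTt iM iN.
Qed.

Local Notation can := (can_pairing tauM tauN tauT t).

Lemma can_topK (a : fix_t tauM) (b : fix_t tauN) :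
  fix_val (pr_top can a b) = t (fix_val a) (fix_val b).
Proof. by rewrite fix_insubdK // tauTt !fix_valP. Qed.

Lemma can_pairing_dress : is_dress_pairing can.
Proof.
split; split => /=.
- move=> a x y; apply: fix_val_inj.
  by rewrite [RHS]fix_valD !can_topK fix_valD (tensor_addr tT).
- move=> b x y; apply: fix_val_inj.
  by rewrite [RHS]fix_valD !can_topK fix_valD (tensor_addl tT).
- by move=> x y z; rewrite (tensor_addr tT).
- by move=> y x z; rewrite (tensor_addl tT).
- by move=> x y; rewrite tauTt.
- by move=> a b; rewrite can_topK.
- by move=> x b; congr insubd; rewrite (fix_trK iM) tauTt fix_valP (tensor_addl tT).
- by move=> a y; congr insubd; rewrite (fix_trK iN) tauTt fix_valP (tensor_addr tT).
Qed.

Hypotheses (tauMZ : forall r x, tauM (r *: x) = r *: tauM x)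
           (tauNZ : forall r x, tauN (r *: x) = r *: tauN x).

Lemma can_pairing_balanced : balanced (act_r tauM) (act_l tauN) can.
Proof.
split => /= [a r b | x r y].
  by rewrite (fix_scaleK tauMZ) (fix_scaleK tauNZ) (tensor_scalel tT) (tensor_scaler tT).
by rewrite (tensor_scalel tT) (tensor_scaler tT).
Qed.

Variables (B : mackey) (beta : pairing (fix_mackey tauM) (fix_mackey tauN) B).
Hypothesis beta_dress : is_dress_pairing beta.

(* [H] is h (x) id or id (x) h for a halving h of M or of N. *)
Lemma tensor_half : two_invertible M \/ two_invertible N ->
  exists H : T -> T, [/\ is_add H,
    (forall m n, H (t m n) + H (t m n) = t m n),
    (forall m n, tauT (H (t m n)) = H (tauT (t m n))) &
    (forall a b, exists x y, H (t (fix_val a) (fix_val b)) = t x y /\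
                   mk_tr (pr_bot beta x y) = pr_top beta a b)].
Proof.
have [_ [_ _ tr_resr tr_resl]] := beta_dress.
case=> [/two_invertible_half [h [hD hh hC]] | /two_invertible_half [h [hD hh hC]]].
- have [H [HD Ht]] := tensor_mapl tT hD (fun r x => esym (hC _ (scalerDr r) x)).
  exists H; split => // [m n | m n | a b].
  + by rewrite Ht -(tensor_addl tT) hh.
  + by rewrite Ht !tauTt Ht (hC _ (raddfD tauM)).
  exists (h (fix_val a)), (fix_val b); split; first exact: Ht.
  move: (tr_resr (h (fix_val a)) b) => /= ->; congr pr_top.
  by apply: fix_val_inj; rewrite (fix_trK iM) (hC _ (raddfD tauM)) fix_valP hh.
- have [H [HD Ht]] := tensor_mapr tT hD (fun r x => esym (hC _ (scalerDr r) x)).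
  exists H; split => // [m n | m n | a b].
  + by rewrite Ht -(tensor_addr tT) hh.
  + by rewrite Ht !tauTt Ht (hC _ (raddfD tauN)).
  exists (fix_val a), (h (fix_val b)); split; first exact: Ht.
  move: (tr_resl a (h (fix_val b))) => /= ->; congr pr_top.
  by apply: fix_val_inj; rewrite (fix_trK iN) (hC _ (raddfD tauN)) fix_valP hh.
Qed.
End CanonicalPairing.

Section RelativeBoxInverse.
Variables (k : comPzRingType) (M N T : lmodType k).
Variables (tauM : {additive M -> M}) (tauN : {additive N -> N}) (tauT : {additive T -> T}).
Variable t : M -> N -> T.
Hypotheses (iM : involutive tauM) (iN : involutive tauN) (tT : is_tensor t).
Hypothesis tauTt : forall m n, tauT (t m n) = t (tauM m) (tauN n).
Variables (B : mackey) (beta : pairing (fix_mackey tauM) (fix_mackey tauN) B).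
Hypothesis box : is_rel_box (act_r tauM) (act_l tauN) beta.

Local Notation can := (can_pairing tauM tauN tauT t).

Variable phi : mackey_hom B (fix_mackey tauT).
Hypotheses (phih : is_mackey_hom phi)
  (phit : forall a b, mh_top phi (pr_top beta a b) = pr_top can a b)
  (phib : forall x y, mh_bot phi (pr_bot beta x y) = pr_bot can x y).
Variable psib : T -> mk_bot B.
Hypotheses (psibD : is_add psib) (psibt : forall m n, psib (t m n) = pr_bot beta m n).
Variable H : T -> T.
Hypotheses (HD : is_add H) (Hh : forall m n, H (t m n) + H (t m n) = t m n)
  (Htau : forall m n, tauT (H (t m n)) = H (tauT (t m n)))
  (Hfrob : forall a b, exists x y, H (t (fix_val a) (fix_val b)) = t x y /\
                         mk_tr (pr_bot beta x y) = pr_top beta a b).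

Lemma half_tensorK z : H z + H z = z.
Proof.
apply: (tensor_add_ext tT (g1 := fun z => H z + H z) (g2 := id)) => //.
by move=> x y /=; rewrite HD addrACA.
Qed.

Lemma half_tensor_tau z : tauT (H z) = H (tauT z).
Proof.
apply: (tensor_add_ext tT (g1 := tauT \o H) (g2 := H \o tauT)) => //.
- by move=> x y /=; rewrite HD raddfD.
- by move=> x y /=; rewrite raddfD HD.
Qed.

Lemma psib_tau z : psib (tauT z) = mk_w (psib z).
Proof.
have [[[wD _ _] _] [_ [w_pr _ _ _]] _ _] := box.
apply: (tensor_add_ext tT (g1 := psib \o tauT) (g2 := @mk_w B \o psib)) => /=.
- by move=> x y /=; rewrite raddfD psibD.
- by move=> x y /=; rewrite psibD wD.
- by move=> m n /=; rewrite tauTt !psibt w_pr.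
Qed.

Definition psi : mackey_hom (fix_mackey tauT) B :=
  @MackeyHom (fix_mackey tauT) B (fun u => mk_tr (psib (H (fix_val u)))) psib.

Lemma psi_hom : is_mackey_hom psi.
Proof.
have [[[_ _ trD] [_ _ tr_w res_tr]] _ _ _] := box.
have iT := tensor_involutive iM iN tT tauTt.
split => /=.
- by move=> u v; rewrite fix_valD HD psibD trD.
- exact: psibD.
- exact: psib_tau.
- by move=> a; rewrite res_tr -psib_tau half_tensor_tau fix_valP -psibD half_tensorK.
- move=> x; rewrite (fix_trK iT) HD psibD -half_tensor_tau psib_tau trD tr_w.
  by rewrite -trD -psibD half_tensorK.
Qed.

Lemma psi_can a b : mh_top psi (pr_top can a b) = pr_top beta a b.
Proof.
rewrite /= (can_topK tauTt).
by have [x [y [-> <-]]] := Hfrob a b; rewrite psibt.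
Qed.

(* Both [psi \o phi] and the identity factor [beta] through itself, so they
   agree by the uniqueness clause of the relative box product. *)
Lemma psi_phiK : cancel (mh_top phi) (mh_top psi) /\ cancel (mh_bot phi) (mh_bot psi).
Proof.
have [Bm Bd Bbal Buniv] := box.
have [f0 [_ _ _ f0_uniq]] := Buniv B beta Bm Bd Bbal.
have [compt compb] := f0_uniq _ (mackey_hom_comp phih psi_hom)
  (fun a b => etrans (congr1 (mh_top psi) (phit a b)) (psi_can a b))
  (fun x y => etrans (congr1 psib (phib x y)) (psibt x y)).
have [idt idb] := f0_uniq _ (mackey_hom_id B) (fun _ _ => erefl) (fun _ _ => erefl).
by split=> u; [move: (compt u) (idt u) | move: (compb u) (idb u)] => /= -> <-.
Qed.

Lemma phi_psiK_bot : cancel (mh_bot psi) (mh_bot phi).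
Proof.
have [_ phiD _ _ _] := phih.
apply: (tensor_add_ext tT (g1 := mh_bot phi \o psib) (g2 := id)) => //.
- by move=> x y /=; rewrite psibD phiD.
- by move=> m n /=; rewrite psibt phib.
Qed.

Lemma phi_psiK_top : cancel (mh_top psi) (mh_top phi).
Proof.
move=> u; apply: fix_val_inj.
have [_ _ _ phi_res _] := phih; have [_ _ _ psi_res _] := psi_hom.
by move: (phi_res (mh_top psi u)) (psi_res u) => /= <- <-; apply: phi_psiK_bot.
Qed.

Lemma rel_box_inverse : mackey_inverse phi psi.
Proof. by have [? ?] := psi_phiK; split; [| exact: phi_psiK_top | | exact: phi_psiK_bot]. Qed.
End RelativeBoxInverse.

Lemma rel_box_fix_tensor (k : comPzRingType) (M N T : lmodType k)
    (tauM : {additive M -> M}) (tauN : {additive N -> N}) (tauT : {additive T -> T})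
    (t : M -> N -> T) :
  involutive tauM -> involutive tauN ->
  (forall r x, tauM (r *: x) = r *: tauM x) -> (forall r x, tauN (r *: x) = r *: tauN x) ->
  two_invertible M \/ two_invertible N -> is_tensor t ->
  (forall m n, tauT (t m n) = t (tauM m) (tauN n)) ->
  forall (B : mackey) (beta : pairing (fix_mackey tauM) (fix_mackey tauN) B),
  is_rel_box (act_r tauM) (act_l tauN) beta ->
  exists (phi : mackey_hom B (fix_mackey tauT)) (psi : mackey_hom (fix_mackey tauT) B),
  [/\ is_mackey_hom phi, is_mackey_hom psi, mackey_inverse phi psi,
      (forall a b, mh_top phi (pr_top beta a b) = pr_top (can_pairing tauM tauN tauT t) a b) &
      (forall x y, mh_bot phi (pr_bot beta x y) = pr_bot (can_pairing tauM tauN tauT t) x y)].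
Proof.
move=> iM iN tauMZ tauNZ two tT tauTt B beta box.
have [_ Bd [_ Bbal] Buniv] := box.
have [[_ _ betaDr betaDl] _] := Bd.
have [phi [phih phit phib _]] := Buniv _ _
  (fix_mackeyP (tensor_involutive iM iN tT tauTt))
  (can_pairing_dress iM iN tT tauTt) (can_pairing_balanced tauT tT tauMZ tauNZ).
have [psib [psibD psibt _]] :=
  tensor_balanced_univ tT betaDr betaDl (fun r m n => Bbal m r n).
have [H [HD Hh Htau Hfrob]] := tensor_half iM iN tT tauTt Bd two.
exists phi, (psi tauT psib H); split => //.
- exact: (psi_hom iM iN tT tauTt box psibD psibt HD Hh Htau).
- exact: (rel_box_inverse iM iN tT tauTt box phih phit phib psibD psibt HD Hh Htau Hfrob).
Qed.

Section FixTambara.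
Variables (L : comPzRingType) (s : {additive L -> L}).
Hypotheses (s_inv : involutive s) (sM : forall x y, s (x * y) = s x * s y) (s1 : s 1 = 1).

Lemma fix_mulK x y : s x = x -> s y = y -> fix_val (insubd (0 : fix_t s) (x * y)) = x * y.
Proof. by move=> sx sy; rewrite fix_insubdK // sM sx sy. Qed.

Lemma fix_nmK x : fix_val (insubd (0 : fix_t s) (x * s x)) = x * s x.
Proof. by rewrite fix_insubdK // sM s_inv mulrC. Qed.

Lemma fix_oneK : fix_val (insubd (0 : fix_t s) 1) = 1.
Proof. by rewrite fix_insubdK. Qed.

Lemma fix_tambaraP : is_tambara (fix_tambara s).
Proof.
have fv := @fix_valP _ s; have trK := fix_trK s_inv.
split; split => /=.
- exact: fix_mackeyP.
- split.
  + by move=> a b c; apply: fix_val_inj; rewrite !fix_mulK ?sM ?fv ?mulrA.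
  + by move=> a b; apply: fix_val_inj; rewrite !fix_mulK ?fv 1?mulrC.
  + by move=> a; apply: fix_val_inj; rewrite fix_mulK ?fv ?fix_oneK ?mul1r.
  + move=> a b c; apply: fix_val_inj.
    by rewrite [RHS]fix_valD !fix_mulK ?fv // fix_valD mulrDl.
- by split; [exact: mulrA | exact: mulrC | exact: mul1r | exact: mulrDl].
- by split; [move=> a b; rewrite fix_mulK ?fv | rewrite fix_oneK].
- by split; [exact: sM | exact: s1].
- move=> x a; apply: fix_val_inj; rewrite !trK fix_mulK ?fv //.
    by rewrite mulrDl sM fv.
  by rewrite raddfD s_inv addrC.
- split.
  + move=> x y; apply: fix_val_inj.
    by rewrite !fix_nmK fix_mulK ?sM ?s_inv 1?mulrACA // mulrC.
  + by rewrite s1 mulr1.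
  + by move=> x; rewrite s_inv mulrC.
  + by move=> x; rewrite fix_nmK.
  + move=> x y; apply: fix_val_inj; rewrite !fix_valD !fix_nmK trK raddfD.
    by rewrite sM s_inv; ring.
Qed.
End FixTambara.

Definition transport_tambara (B P : mackey) (f : mackey_hom B P) (g : mackey_hom P B)
    (oP : tambara_ops P) : tambara_ops B :=
  @TambaraOps B (fun u v => mh_top g (to_mul1 oP (mh_top f u) (mh_top f v)))
    (mh_top g (to_one1 oP))
    (fun x y => mh_bot g (to_mule oP (mh_bot f x) (mh_bot f y)))
    (mh_bot g (to_onee oP))
    (fun x => mh_top g (to_nm oP (mh_bot f x))).

Section TransportTambara.
Variables (B P : mackey) (f : mackey_hom B P) (g : mackey_hom P B) (oP : tambara_ops P).
Hypotheses (fh : is_mackey_hom f) (gh : is_mackey_hom g) (fg : mackey_inverse f g).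

Lemma transport_tambaraP : is_mackey B -> is_tambara oP ->
  is_tambara (transport_tambara f g oP).
Proof.
move=> Bm [[_ [mA mC m1 mD] [eA eC e1 eD]] [[rM r1] [wM w1] frob [nM n1 nw nres nadd]]].
have [fDt fDb fw fres ftr] := fh; have [gDt gDb gw gres gtr] := gh.
have [gft fgt gfb fgb] := fg.
split; split => //=.
- split.
  + by move=> a b c; rewrite !fgt mA.
  + by move=> a b; rewrite mC.
  + by move=> a; rewrite fgt m1 gft.
  + by move=> a b c; rewrite fDt mD gDt.
- split.
  + by move=> a b c; rewrite !fgb eA.
  + by move=> a b; rewrite eC.
  + by move=> a; rewrite fgb e1 gfb.
  + by move=> a b c; rewrite fDb eD gDb.
- by split; [move=> a b; rewrite -gres rM !fres | rewrite -gres r1].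
- by split; [move=> x y; rewrite -gw wM !fw | rewrite -gw w1].
- by move=> x a; rewrite ftr frob gtr fres.
- split.
  + by move=> x y; rewrite fgb nM !fgt.
  + by rewrite fgb n1.
  + by move=> x; rewrite fw nw.
  + by move=> x; rewrite -gres nres fw.
  + by move=> x y; rewrite fDb nadd !gDt gtr fw.
Qed.

End TransportTambara.

Section TensorAlgebra.
Variables (k : comPzRingType) (M N T : comAlgType k).
Variables (tauM : {lrmorphism M -> M}) (tauN : {lrmorphism N -> N}) (tauT : {linear T -> T}).
Variable t : M -> N -> T.
Hypotheses (iM : involutive tauM) (iN : involutive tauN) (tT : is_tensor t).
Hypotheses (tM : forall m n m' n', t m n * t m' n' = t (m * m') (n * n')) (t11 : t 1 1 = 1).
Hypothesis tauTt : forall m n, tauT (t m n) = t (tauM m) (tauN n).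

Lemma tensor_tauM z z' : tauT (z * z') = tauT z * tauT z'.
Proof.
move: z z'; apply: (tensor_add_ext2 tT (F := fun z z' => tauT (z * z')))
  => [z x y | z x y | z x y | z x y | m n m' n'] /=.
- by rewrite mulrDr raddfD.
- by rewrite mulrDl raddfD.
- by rewrite raddfD mulrDr.
- by rewrite raddfD mulrDl.
- by rewrite tM !tauTt !rmorphM tM.
Qed.

Lemma tensor_tau1 : tauT 1 = 1.
Proof. by rewrite -t11 tauTt !rmorph1. Qed.

Local Notation tauT_inv := (tensor_involutive iM iN tT tauTt).

Lemma fix_tensor_tambara : is_tambara (fix_tambara tauT).
Proof. exact: (fix_tambaraP tauT_inv tensor_tauM tensor_tau1). Qed.

Variables (B : mackey) (beta : pairing (fix_mackey tauM) (fix_mackey tauN) B).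
Variables (phi : mackey_hom B (fix_mackey tauT)) (psi : mackey_hom (fix_mackey tauT) B).
Hypotheses (phih : is_mackey_hom phi) (psih : is_mackey_hom psi)
  (phipsi : mackey_inverse phi psi).
Hypotheses
  (phit : forall a b, mh_top phi (pr_top beta a b) = pr_top (can_pairing tauM tauN tauT t) a b)
  (phib : forall x y, mh_bot phi (pr_bot beta x y) = pr_bot (can_pairing tauM tauN tauT t) x y).

Lemma psi_tensor m n : mh_bot psi (t m n) = pr_bot beta m n.
Proof. by have [_ _ psi_phib _] := phipsi; rewrite -[RHS]psi_phib phib. Qed.

Lemma transport_box_compat : box_tambara_compat (fix_tambara tauM) (fix_tambara tauN)
  (transport_tambara phi psi (fix_tambara tauT)) beta.
Proof.
have [psi_phit _ _ _] := phipsi.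
have canK := can_topK tauTt.
have fvM := @fix_valP _ tauM; have fvN := @fix_valP _ tauN; have fvT := @fix_valP _ tauT.
split => /=.
- move=> a b a' b'; rewrite !phit -[RHS]psi_phit phit; congr (mh_top psi _).
  apply: fix_val_inj; rewrite (fix_mulK tensor_tauM) ?fvT // !canK tM.
  by rewrite !(fix_mulK (rmorphM _)) ?fvM ?fvN.
- rewrite -[RHS]psi_phit phit; congr (mh_top psi _); apply: fix_val_inj.
  by rewrite canK (fix_oneK tensor_tau1) !(fix_oneK (rmorph1 _)) t11.
- by move=> x y x' y'; rewrite !phib /= tM psi_tensor.
- by rewrite -t11 psi_tensor.
- move=> x y; rewrite phib -[RHS]psi_phit phit; congr (mh_top psi _); apply: fix_val_inj.
  rewrite canK (fix_nmK tauT_inv tensor_tauM) !(fix_nmK _ (rmorphM _)) //.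
  by rewrite /= tauTt tM.
Qed.

Section CompatibleStructure.
Variable oB : tambara_ops B.
Hypotheses (oBt : is_tambara oB)
  (oBc : box_tambara_compat (fix_tambara tauM) (fix_tambara tauN) oB beta).

(* Both sides are biadditive in (psi z, psi z') and agree on pure tensors by
   compatibility of the multiplication with [beta]. *)
Lemma phi_mule x y : mh_bot phi (to_mule oB x y) = mh_bot phi x * mh_bot phi y.
Proof.
have [[_ _ [_ eC _ eD]] _] := oBt; have [_ _ c_mul _ _] := oBc.
have [_ phiD _ _ _] := phih; have [_ _ psi_phib phi_psib] := phipsi.
have [_ psiD _ _ _] := psih.
suff: forall z z', mh_bot phi (to_mule oB (mh_bot psi z) (mh_bot psi z')) = z * z'.
  by move/(_ (mh_bot phi x) (mh_bot phi y)); rewrite !psi_phib.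
apply: (tensor_add_ext2 tT
  (F := fun z z' => mh_bot phi (to_mule oB (mh_bot psi z) (mh_bot psi z'))))
  => [z u v | z u v | z u v | z u v | m n m' n'] /=.
- by rewrite psiD [to_mule oB _ _]eC eD phiD [to_mule oB _ _]eC [to_mule oB (mh_bot psi v) _]eC.
- by rewrite psiD eD phiD.
- by rewrite mulrDr.
- by rewrite mulrDl.
- by rewrite !psi_tensor c_mul phib tM.
Qed.

(* Top-level identities are checked after [res], which is injective on fixed
   points and intertwined by [phi]. *)
Lemma box_compat_tambara_hom : is_tambara_hom oB (fix_tambara tauT) phi.
Proof.
have [_ [[rM r1] _ _ [_ _ _ nres _]]] := oBt; have [_ _ _ c_one _] := oBc.
have [_ _ phi_w phi_res _] := phih; have fvT := @fix_valP _ tauT.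
split => //; split => /=.
- move=> u v; apply: fix_val_inj => /=.
  move: (phi_res (to_mul1 oB u v)) => /= <-; rewrite rM phi_mule !phi_res.
  by rewrite (fix_mulK tensor_tauM) ?fvT.
- apply: fix_val_inj => /=; move: (phi_res (to_one1 oB)) => /= <-.
  by rewrite r1 c_one phib /= t11 (fix_oneK tensor_tau1).
- exact: phi_mule.
- by rewrite c_one phib /= t11.
- move=> x; apply: fix_val_inj => /=; move: (phi_res (to_nm oB x)) => /= <-.
  by rewrite nres phi_mule phi_w (fix_nmK tauT_inv tensor_tauM).
Qed.
End CompatibleStructure.
End TensorAlgebra.
Theorem mainTheorem4 :
  (forall (k : comPzRingType) (M N : lmodType k)
      (tauM : {linear M -> M}) (tauN : {linear N -> N}),
    involutive tauM -> involutive tauN ->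
    two_invertible M \/ two_invertible N ->
    forall (T : lmodType k) (t : M -> N -> T) (tauT : {linear T -> T}),
    is_tensor t ->
    (forall m n, tauT (t m n) = t (tauM m) (tauN n)) ->
    forall (B : mackey) (beta : pairing (fix_mackey tauM) (fix_mackey tauN) B),
    is_rel_box (act_r tauM) (act_l tauN) beta ->
    exists phi : mackey_hom B (fix_mackey tauT),
      [/\ is_mackey_iso phi,
          (forall a b, mh_top phi (pr_top beta a b) =
                       pr_top (can_pairing tauM tauN tauT t) a b) &
          (forall x y, mh_bot phi (pr_bot beta x y) =
                       pr_bot (can_pairing tauM tauN tauT t) x y)])
  /\
  (forall (k : comPzRingType) (M N : comAlgType k)
      (tauM : {lrmorphism M -> M}) (tauN : {lrmorphism N -> N}),
    involutive tauM -> involutive tauN ->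
    two_invertible M \/ two_invertible N ->
    forall (T : comAlgType k) (t : M -> N -> T) (tauT : {linear T -> T}),
    is_tensor t ->
    (forall m n m' n', t m n * t m' n' = t (m * m') (n * n')) ->
    t 1 1 = 1 ->
    (forall m n, tauT (t m n) = t (tauM m) (tauN n)) ->
    forall (B : mackey) (beta : pairing (fix_mackey tauM) (fix_mackey tauN) B),
    is_rel_box (act_r tauM) (act_l tauN) beta ->
    exists phi : mackey_hom B (fix_mackey tauT),
      [/\ is_mackey_iso phi,
          (forall a b, mh_top phi (pr_top beta a b) =
                       pr_top (can_pairing tauM tauN tauT t) a b),
          (forall x y, mh_bot phi (pr_bot beta x y) =
                       pr_bot (can_pairing tauM tauN tauT t) x y),
          (exists oB : tambara_ops B, is_tambara oB /\
             box_tambara_compat (fix_tambara tauM) (fix_tambara tauN) oB beta) &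
          (forall oB : tambara_ops B, is_tambara oB ->
             box_tambara_compat (fix_tambara tauM) (fix_tambara tauN) oB beta ->
             is_tambara_hom oB (fix_tambara tauT) phi)]).
Proof.
split.
- move=> k M N tauM tauN iM iN two T t tauT tT tauTt B beta box.
  have [phi [psi [phih _ phipsi phit phib]]] := rel_box_fix_tensor iM iN
    (fun r x => linearZ_LR tauM r x) (fun r x => linearZ_LR tauN r x) two tT tauTt box.
  by exists phi; split => //; apply: mackey_inverse_iso phih phipsi.
- move=> k M N tauM tauN iM iN two T t tauT tT tM t11 tauTt B beta box.
  have [phi [psi [phih psih phipsi phit phib]]] := rel_box_fix_tensor iM iN
    (fun r x => linearZ_LR tauM r x) (fun r x => linearZ_LR tauN r x) two tT tauTt box.
  have [Bm _ _ _] := box.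
  exists phi; split => //.
  + exact: mackey_inverse_iso phih phipsi.
  + exists (transport_tambara phi psi (fix_tambara tauT)); split.
      exact: transport_tambaraP Bm (fix_tensor_tambara iM iN tT tM t11 tauTt).
    exact: (transport_box_compat iM iN tT tM t11 tauTt phipsi phit phib).
  + move=> oB oBt oBc.
    exact: (box_compat_tambara_hom iM iN tT tM t11 tauTt phih psih phipsi phib oBt oBc).
Qed.
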